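(* Let $\mathrm{Sol}$ be $\mathbb{R}^3$ with Riemannian metric $e^{-2z}dx^2+e^{2z}dy^2+dz^2$, let $r>0$, and let $\mathcal{S}_r$ be the metric sphere of radius $r$ centered at the origin. If $p=(x,y,z)\in\mathcal{S}_r$ with $x>0$, then $\eta_X(p)$ lies in the open disk of radius $r$ centered at the origin in the plane $\Pi_X=\{x=0\}$, with respect to the induced metric $e^{2z}dy^2+dz^2$ on $\Pi_X$.
   Context: $\eta_X(x,y,z)=(0,y,z)$. The plane $\Pi_X$ with the induced metric is isometric to the hyperbolic plane. *)

From Stdlib Require Import Reals.
From Coquelicot Require Import Coquelicot.
Open Scope R_scope.

Definition C1_on01 (f : R -> R) : Prop :=
  forall t, 0 <= t <= 1 -> ex_derive f t /\ continuous (Derive f) t.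

Definition sol_length (gx gy gz : R -> R) : R :=
  RInt (fun t => sqrt (exp (-2 * gz t) * (Derive gx t) ^ 2
                       + exp (2 * gz t) * (Derive gy t) ^ 2
                       + (Derive gz t) ^ 2)) 0 1.

Definition sol_lengths (p q : R * R * R) (L : R) : Prop :=
  exists gx gy gz : R -> R,
    C1_on01 gx /\ C1_on01 gy /\ C1_on01 gz /\
    (gx 0, gy 0, gz 0) = p /\ (gx 1, gy 1, gz 1) = q /\
    L = sol_length gx gy gz.

Definition sol_dist (p q : R * R * R) : Rbar := Glb_Rbar (sol_lengths p q).

Definition sol_sphere (r : R) (p : R * R * R) : Prop :=
  sol_dist (0, 0, 0) p = Finite r.

(* Projection eta_X(x,y,z) = (0,y,z), with the plane Pi_X = {x=0}
   parametrized by (y,z). *)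
Definition etaX (p : R * R * R) : R * R :=
  let '(_, y, z) := p in (y, z).

Definition piX_length (gy gz : R -> R) : R :=
  RInt (fun t => sqrt (exp (2 * gz t) * (Derive gy t) ^ 2
                       + (Derive gz t) ^ 2)) 0 1.

Definition piX_lengths (p q : R * R) (L : R) : Prop :=
  exists gy gz : R -> R,
    C1_on01 gy /\ C1_on01 gz /\
    (gy 0, gz 0) = p /\ (gy 1, gz 1) = q /\
    L = piX_length gy gz.

Definition piX_dist (p q : R * R) : Rbar := Glb_Rbar (piX_lengths p q).

Definition piX_open_disk (r : R) (w : R * R) : Prop :=
  Rbar_lt (piX_dist (0, 0) w) (Finite r).

(** Take a curve from the origin to [(x, y, z)] whose Sol-length [L] is close to [r]
    and project it to [Pi_X].  Along the curve the height stays below [K := r + 1], so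
    its term [e^(-2z) x'^2] is at least [(e^(-K) x')^2].  Since
    [sqrt (a + b) - sqrt b >= a / (2 sqrt (a + b))], dropping that term shortens the
    curve, after integration and an AM-GM step, by at least [(e^(-K) x)^2 / (2K)], an
    amount depending only on [x > 0]; so the projection is shorter than [r] once [L]
    is that close to [r]. *)

From Stdlib Require Import Reals Lra Classical.
From Coquelicot Require Import Coquelicot.
Open Scope R_scope.

Lemma Rle_sqrt_of_sqr_le v w : v ^ 2 <= w -> v <= sqrt w.
Proof.
  intros Hvw.
  apply Rle_trans with (Rabs v); [apply Rle_abs |].
  rewrite <- sqrt_Rsqr_abs.
  apply sqrt_le_1_alt; unfold Rsqr; lra.
Qed.

Lemma sqrt_le_sqrt_add_sub a b c lam : 0 <= a -> 0 <= b -> c ^ 2 <= a ->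
  sqrt b <= (1 + lam ^ 2 / 2) * sqrt (a + b) - lam * c.
Proof.
  intros Ha Hb Hca.
  set (s := sqrt (a + b)); set (v := sqrt b).
  assert (Hs0 : 0 <= s) by apply sqrt_pos.
  assert (Hv0 : 0 <= v) by apply sqrt_pos.
  assert (Hs2 : s * s = a + b) by (apply sqrt_sqrt; lra).
  assert (Hv2 : v * v = b) by (apply sqrt_sqrt; lra).
  destruct (Req_dec s 0) as [Hs | Hs].
  - assert (Hv : v = 0) by nra.
    assert (Hc : c = 0) by nra.
    rewrite Hs, Hv, Hc; lra.
  - apply Rmult_le_reg_l with (2 * s); [lra |].
    (* [s^2 - v^2 = a] gives [2 s (s - v) >= a], and [a + lam^2 s^2 >= c^2 + lam^2 s^2 >= 2 lam c s]. *)
    assert (Hdrop : 2 * s * (s - v) >= a) by nra.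
    assert (Hamgm : a + lam ^ 2 * (s * s) >= 2 * lam * c * s)
      by (pose proof (pow2_ge_0 (lam * s - c)); nra).
    nra.
Qed.

Lemma Glb_Rbar_le_elem (E : R -> Prop) (L : R) : E L -> Rbar_le (Glb_Rbar E) L.
Proof. intros HL; exact (proj1 (Glb_Rbar_correct E) L HL). Qed.

Lemma Glb_Rbar_approx (E : R -> Prop) (r eps : R) :
  Glb_Rbar E = Finite r -> 0 < eps -> exists L, E L /\ L < r + eps.
Proof.
  intros Hglb Heps.
  apply NNPP; intros Hnone.
  assert (Hlb : is_lb_Rbar E (r + eps)).
  { intros L HL; simpl.
    apply Rnot_lt_le; intros Hlt; apply Hnone; exists L; auto. }
  pose proof (proj2 (Glb_Rbar_correct E) _ Hlb) as Hle.
  rewrite Hglb in Hle; simpl in Hle; lra.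
Qed.

Lemma ex_RInt_of_continuous_on (f : R -> R) (a b : R) :
  a <= b -> (forall t, a <= t <= b -> continuous f t) -> ex_RInt f a b.
Proof.
  intros Hab Hf; apply (@ex_RInt_continuous R_CompleteNormedModule).
  intros t; rewrite Rmin_left, Rmax_right by lra; apply Hf.
Qed.

Lemma RInt_Derive_C1_on01 (f : R -> R) (a b : R) : C1_on01 f -> 0 <= a <= b -> b <= 1 ->
  RInt (Derive f) a b = f b - f a.
Proof.
  intros Hf Hab Hb.
  apply RInt_Derive; intros t; rewrite Rmin_left, Rmax_right by lra;
    intros Ht; apply Hf; lra.
Qed.

Definition sol_speed (gx gy gz : R -> R) (t : R) : R :=
  sqrt (exp (-2 * gz t) * (Derive gx t) ^ 2
        + exp (2 * gz t) * (Derive gy t) ^ 2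
        + (Derive gz t) ^ 2).

Definition piX_speed (gy gz : R -> R) (t : R) : R :=
  sqrt (exp (2 * gz t) * (Derive gy t) ^ 2 + (Derive gz t) ^ 2).

Lemma continuous_Rplus (f g : R -> R) (t : R) :
  continuous f t -> continuous g t -> continuous (fun u => f u + g u) t.
Proof. exact (@continuous_plus _ R_AbsRing R_NormedModule f g t). Qed.

Lemma continuous_Rmult (f g : R -> R) (t : R) :
  continuous f t -> continuous g t -> continuous (fun u => f u * g u) t.
Proof. exact (@continuous_mult _ R_AbsRing f g t). Qed.

Lemma continuous_pow (f : R -> R) (n : nat) (t : R) :
  continuous f t -> continuous (fun u => f u ^ n) t.
Proof.
  intros Hf; induction n as [| n IH]; simpl.
  - apply continuous_const.
  - apply continuous_Rmult; assumption.
Qed.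

Ltac solve_continuous :=
  repeat match goal with
  | |- continuous (fun _ => sqrt _) _ => apply continuous_sqrt_comp
  | |- continuous (fun _ => exp _) _ => apply continuous_exp_comp
  | |- continuous (fun _ => _ + _) _ => apply continuous_Rplus
  | |- continuous (fun _ => _ * _) _ => apply continuous_Rmult
  | |- continuous (fun _ => _ ^ _) _ => apply continuous_pow
  | |- continuous (fun _ => ?c) _ => apply continuous_const
  | H : continuous ?f ?t |- continuous ?f ?t => exact H
  end.

Section C1Curve.

Variables gx gy gz : R -> R.
Hypothesis Cx : C1_on01 gx.
Hypothesis Cy : C1_on01 gy.
Hypothesis Cz : C1_on01 gz.

Lemma sol_speed_continuous t : 0 <= t <= 1 -> continuous (sol_speed gx gy gz) t.
Proof.
  intros Ht.
  destruct (Cx t Ht) as [_ Hdx], (Cy t Ht) as [_ Hdy], (Cz t Ht) as [Hz Hdz].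
  pose proof (ex_derive_continuous gz t Hz).
  unfold sol_speed; solve_continuous.
Qed.

Lemma piX_speed_continuous t : 0 <= t <= 1 -> continuous (piX_speed gy gz) t.
Proof.
  intros Ht.
  destruct (Cy t Ht) as [_ Hdy], (Cz t Ht) as [Hz Hdz].
  pose proof (ex_derive_continuous gz t Hz).
  unfold piX_speed; solve_continuous.
Qed.

Lemma ex_RInt_sol_speed a b : 0 <= a <= b -> b <= 1 -> ex_RInt (sol_speed gx gy gz) a b.
Proof.
  intros Hab Hb; apply ex_RInt_of_continuous_on; [lra |].
  intros t Ht; apply sol_speed_continuous; lra.
Qed.

Lemma height_le_sol_length t : 0 <= t <= 1 -> gz t - gz 0 <= sol_length gx gy gz.
Proof.
  intros Ht.
  rewrite <- (RInt_Derive_C1_on01 gz 0 t) by (auto; lra).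
  apply Rle_trans with (RInt (sol_speed gx gy gz) 0 t).
  - apply RInt_le; [lra | | apply ex_RInt_sol_speed; lra |].
    + apply ex_RInt_of_continuous_on; [lra |].
      intros u Hu; apply Cz; lra.
    + intros u _; unfold sol_speed; apply Rle_sqrt_of_sqr_le.
      pose proof (exp_pos (-2 * gz u)); pose proof (exp_pos (2 * gz u)).
      pose proof (pow2_ge_0 (Derive gx u)); pose proof (pow2_ge_0 (Derive gy u)).
      nra.
  - unfold sol_length; fold (sol_speed gx gy gz).
    rewrite <- (RInt_Chasles (sol_speed gx gy gz) 0 t 1)
      by (apply ex_RInt_sol_speed; lra).
    assert (0 <= RInt (sol_speed gx gy gz) t 1).
    { apply RInt_ge_0; [lra | apply ex_RInt_sol_speed; lra |].
      intros; apply sqrt_pos. }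
    change (plus ?u ?v) with (u + v); lra.
Qed.

Lemma piX_length_le K lam : (forall t, 0 <= t <= 1 -> gz t <= K) ->
  piX_length gy gz
  <= (1 + lam ^ 2 / 2) * sol_length gx gy gz - lam * exp (- K) * (gx 1 - gx 0).
Proof.
  intros HK.
  set (A := 1 + lam ^ 2 / 2); set (B := lam * exp (- K)).
  assert (Hcomb : is_RInt (fun t => A * sol_speed gx gy gz t - B * Derive gx t) 0 1
                    (A * sol_length gx gy gz - B * (gx 1 - gx 0))).
  { apply (@is_RInt_minus R_NormedModule);
      apply (@is_RInt_scal R_NormedModule).
    - apply (@RInt_correct R_CompleteNormedModule), ex_RInt_sol_speed; lra.
    - rewrite <- (RInt_Derive_C1_on01 gx 0 1) by (auto; lra).
      apply (@RInt_correct R_CompleteNormedModule), ex_RInt_of_continuous_on; [lra |].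
      intros t Ht; apply Cx; lra. }
  rewrite <- (is_RInt_unique _ _ _ _ Hcomb).
  apply RInt_le; [lra | | eexists; exact Hcomb |].
  { apply ex_RInt_of_continuous_on; [lra |]; apply piX_speed_continuous. }
  intros t Ht.
  assert (Hexp : exp (- K) ^ 2 <= exp (-2 * gz t)).
  { replace (exp (- K) ^ 2) with (exp (-2 * K))
      by (replace (-2 * K) with (- K + - K) by ring; rewrite exp_plus; ring).
    destruct (Req_dec K (gz t)) as [E | E]; [rewrite E; lra |].
    left; apply exp_increasing; pose proof (HK t); lra. }
  unfold piX_speed, sol_speed, A, B.
  rewrite Rmult_assoc, (Rplus_assoc (exp (-2 * gz t) * Derive gx t ^ 2)).
  apply sqrt_le_sqrt_add_sub.
  - pose proof (exp_pos (-2 * gz t)); pose proof (pow2_ge_0 (Derive gx t)); nra.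
  - pose proof (exp_pos (2 * gz t)); pose proof (pow2_ge_0 (Derive gy t)).
    pose proof (pow2_ge_0 (Derive gz t)); nra.
  - rewrite Rpow_mult_distr.
    apply Rmult_le_compat_r; [apply pow2_ge_0 | exact Hexp].
Qed.

Lemma piX_length_gap K : 0 < K -> gz 0 = 0 -> sol_length gx gy gz <= K ->
  piX_length gy gz
  <= sol_length gx gy gz - (exp (- K) * (gx 1 - gx 0)) ^ 2 / (2 * K).
Proof.
  intros HK Hz0 HLK.
  set (m := exp (- K) * (gx 1 - gx 0)).
  assert (Hheight : forall t, 0 <= t <= 1 -> gz t <= K)
    by (intros t Ht; pose proof (height_le_sol_length t Ht); lra).
  (* [lam := m / K] minimises the bound of [piX_length_le] when the length is [K]. *)
  pose proof (piX_length_le K (m / K) Hheight) as Hle.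
  replace (m / K * exp (- K) * (gx 1 - gx 0)) with (m ^ 2 / K) in Hle
    by (unfold m; field; lra).
  assert (Hratio : sol_length gx gy gz / K <= 1).
  { apply Rmult_le_reg_r with K; [lra |].
    replace (sol_length gx gy gz / K * K) with (sol_length gx gy gz) by (field; lra).
    lra. }
  assert (Hquad : (m / K) ^ 2 / 2 * sol_length gx gy gz <= m ^ 2 / (2 * K)).
  { replace ((m / K) ^ 2 / 2 * sol_length gx gy gz)
      with (m ^ 2 / (2 * K) * (sol_length gx gy gz / K)) by (field; lra).
    assert (0 <= m ^ 2 / (2 * K)) by (apply Rdiv_le_0_compat; [apply pow2_ge_0 | lra]).
    nra. }
  replace (m ^ 2 / K) with (2 * (m ^ 2 / (2 * K))) in Hle by (field; lra).
  lra.
Qed.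

End C1Curve.

Theorem lemma3p1 (r : R) (x y z : R) :
  0 < r -> sol_sphere r (x, y, z) -> 0 < x ->
  piX_open_disk r (etaX (x, y, z)).
Proof.
  intros Hr Hsphere Hx.
  set (K := r + 1).
  set (gap := (exp (- K) * x) ^ 2 / (2 * K)).
  assert (Hgap : 0 < gap).
  { unfold gap; pose proof (exp_pos (- K)).
    apply Rdiv_lt_0_compat; [apply pow_lt; nra | unfold K; lra]. }
  destruct (Glb_Rbar_approx _ r (Rmin 1 gap) Hsphere)
    as [L [(gx & gy & gz & Cx & Cy & Cz & H0 & H1 & ->) HL]].
  { apply Rmin_glb_lt; lra. }
  injection H0 as Hx0 Hy0 Hz0; injection H1 as Hx1 Hy1 Hz1.
  pose proof (Rmin_l 1 gap); pose proof (Rmin_r 1 gap).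
  pose proof (piX_length_gap gx gy gz Cx Cy Cz K) as Hproj.
  rewrite Hx0, Hx1, Rminus_0_r in Hproj; fold gap in Hproj.
  unfold piX_open_disk, piX_dist, etaX.
  eapply Rbar_le_lt_trans.
  - apply Glb_Rbar_le_elem.
    exists gy, gz; rewrite Hy0, Hz0, Hy1, Hz1; auto 6.
  - simpl; apply Rle_lt_trans with (sol_length gx gy gz - gap);
      [apply Hproj; unfold K; lra | lra].
Qed.
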